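(* Let $m\ge1$ and $a_1,\dots,a_{2m},b_1,\dots,b_{2m}\in\mathbb{C}$. Assume there exists $j^*\in\mathbb{N}$ such that $\lambda_{2j}=0$ for all $1\le j\le j^*$. Then $\mathrm{Im}\,a_{2j}=\lambda^+_{2j}=0$ for all $1\le j\le j^*$, and $\lambda^-_j=0$ for all $1\le j\le 2j^*+3$ (with $j\le 2m-1$).
   Context: Empty sums are zero. Constants: $\gamma_j=b_{2j}-\sum_{k=1}^{j-1}\bar a_{2(j-k)}\gamma_k$ ($1\le j\le m-1$); $\lambda_{2j}=2\,\mathrm{Im}\,a_{2j}-2\sum_{k=1}^{j-1}\mathrm{Im}(\bar b_{2(j-k)}\gamma_k)$ ($1\le j\le m-1$); $\alpha_j=b_j-\frac12\sum_{k=1}^{j-1}(1+(-1)^{j-k})\bar a_{j-k}\alpha_k$, $\lambda_j^+=2\,\mathrm{Im}\,a_j+\sum_{k=1}^{j-1}(-1)^{j-k+1}\mathrm{Im}(\bar b_{j-k}\alpha_k)$, $\lambda_j^-=-\sum_{k=1}^{j-1}\mathrm{Im}(\bar b_{j-k}\alpha_k)$ ($1\le j\le 2m-1$). *)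

From HB Require Import structures.
From mathcomp Require Import all_boot all_order all_algebra.
Set Implicit Arguments. Unset Strict Implicit. Unset Printing Implicit Defensive.
Import Order.TTheory GRing.Theory Num.Theory.
Local Open Scope ring_scope.

(* Coefficients a_j, b_j (1 <= j <= 2m) are given as functions nat -> C;
   only indices 1..2m are ever used.  C is any numeric closed field
   (e.g. the complex numbers); 'Im and ^* are its imaginary part and
   conjugation. *)
Section Consts.
Variable C : numClosedFieldType.
Variables a b : nat -> C.

Fixpoint gammas (n : nat) : seq C :=
  match n with
  | 0 => [::]
  | n'.+1 =>
    let g := gammas n' in
    rcons g (b (2 * n'.+1)%N - \sum_(1 <= k < n'.+1) (a (2 * (n'.+1 - k))%N)^* * nth 0 g k.-1)
  end.
Definition gamma (j : nat) : C := nth 0 (gammas j) j.-1.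

Definition lambda2 (j : nat) : C :=
  2%:R * 'Im (a (2 * j)%N)
  - 2%:R * \sum_(1 <= k < j) 'Im ((b (2 * (j - k))%N)^* * gamma k).

Fixpoint alphas (n : nat) : seq C :=
  match n with
  | 0 => [::]
  | n'.+1 =>
    let al := alphas n' in
    rcons al (b n'.+1 - 2%:R^-1 * \sum_(1 <= k < n'.+1)
                  (1 + (-1) ^+ (n'.+1 - k)) * (a (n'.+1 - k))^* * nth 0 al k.-1)
  end.
Definition alpha (j : nat) : C := nth 0 (alphas j) j.-1.

Definition lambda_plus (j : nat) : C :=
  2%:R * 'Im (a j) + \sum_(1 <= k < j) (-1) ^+ (j - k + 1) * 'Im ((b (j - k))^* * alpha k).

Definition lambda_minus (j : nat) : C :=
  - \sum_(1 <= k < j) 'Im ((b (j - k))^* * alpha k).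
End Consts.

From HB Require Import structures.
From mathcomp Require Import all_boot all_order all_algebra.
From mathcomp Require Import zify.
Import Order.TTheory GRing.Theory Num.Theory.
Local Open Scope ring_scope.

(* Both gamma and alpha solve a recursion g = f - q * g for the truncated
   convolution (u * g)(n) = sum_{0<k<n} u(n-k) g(k).  The sums entering the
   lambdas are convolutions u * g; they satisfy the same recursion with source
   u * f, which is real because its terms are exchanged with their conjugates
   by k |-> n - k.  Hence u * g is real, by strong induction, as long as the
   kernel q is real.  For gamma the kernel is conj(a_(2d)), so lambda_(2j) = 0
   gives Im a_(2j) = 0 inductively; for alpha the kernel vanishes at odd d and
   is conj(a_d) at even d, hence real on the range [1, 2 j*]. *)

Lemma exchange_big_nat_triangle (R : nmodType) n (F : nat -> nat -> R) :
  \sum_(1 <= k < n) \sum_(1 <= d < k) F k d =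
  \sum_(1 <= d < n) \sum_(d.+1 <= k < n) F k d.
Proof.
elim: n => [|n IHn]; first by rewrite !big_geq.
case: n IHn => [|n] IHn; first by rewrite !big_geq.
rewrite big_nat_recr //= IHn [in RHS]big_nat_recr //= [X in _ = _ + X]big_geq // addr0.
rewrite -big_split /=; apply: eq_big_nat => d /andP[d_gt0 d_lt].
by rewrite [in RHS]big_nat_recr.
Qed.

Section Convolution.
Context {R : comNzRingType}.

Definition conv (u g : nat -> R) (n : nat) : R := \sum_(1 <= k < n) u (n - k)%N * g k.

Lemma conv_le1 u g n : (n <= 1)%N -> conv u g n = 0.
Proof. by move=> n_le1; rewrite /conv big_geq. Qed.

Lemma conv_recursion f g q u :
  (forall n, (0 < n)%N -> g n = f n - conv q g n) ->
  forall n, conv u g n = conv u f n - \sum_(1 <= d < n) q d * conv u g (n - d).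
Proof.
move=> g_rec n; rewrite /conv.
under eq_big_nat => k /andP[k_gt0 _] do rewrite g_rec // mulrBr.
rewrite sumrB; congr (_ - _).
transitivity (\sum_(1 <= k < n) \sum_(1 <= d < k) q d * (u (n - k)%N * g (k - d)%N)).
  apply: eq_big_nat => k _; rewrite /conv mulr_sumr big_nat_rev /=.
  apply: eq_big_nat => l /andP[l_gt0 l_lt_k].
  rewrite (_ : 1 + k - l.+1 = k - l)%N; last by lia.
  by rewrite mulrCA (_ : k - (k - l) = l)%N //; lia.
rewrite exchange_big_nat_triangle; apply: eq_big_nat => d _.
rewrite mulr_sumr -(add1n d) big_addn; apply: eq_big_nat => l _.
by rewrite addnK (_ : n - (l + d) = n - d - l)%N //; lia.
Qed.

End Convolution.

Section RealConvolution.
Context {C : numClosedFieldType}.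

Lemma conv_real (f g q u : nat -> C) (P : pred nat) :
  (forall n, (0 < n)%N -> g n = f n - conv q g n) ->
  (forall n, P n -> conv u f n \is Num.real) ->
  (forall n d, P n -> (0 < d)%N -> (d.+1 < n)%N ->
     q d = 0 \/ q d \is Num.real /\ P (n - d)%N) ->
  forall n, P n -> conv u g n \is Num.real.
Proof.
move=> g_rec uf_real q_ok; elim/ltn_ind=> n IHn Pn.
rewrite (@conv_recursion _ f g q u g_rec) rpredB ?uf_real // big_nat.
apply: rpred_sum => d /andP[d_gt0 d_lt_n].
have [n_d_le1|n_d_gt1] := leqP (n - d) 1; first by rewrite conv_le1 ?mulr0 ?rpred0.
case: (q_ok n d Pn d_gt0) => [|->|[q_real P_n_d]]; first by lia.
  by rewrite mul0r rpred0.
by rewrite rpredM // IHn //; lia.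
Qed.

Lemma sum_rev_conjC_real (z : nat -> C) n :
  (forall k, (0 < k < n)%N -> z (n - k)%N = (z k)^*) ->
  \sum_(1 <= k < n) z k \is Num.real.
Proof.
move=> z_rev; apply/CrealP; rewrite rmorph_sum big_nat_rev /=.
apply: eq_big_nat => k /andP[k_gt0 k_lt_n].
rewrite (_ : 1 + n - k.+1 = n - k)%N; last by lia.
by rewrite z_rev ?conjCK // k_gt0 k_lt_n.
Qed.

Lemma conv_conjC_real (s b : nat -> C) n :
  (forall k, (0 < k < n)%N -> s (n - k)%N = s k) -> (forall k, s k \is Num.real) ->
  conv (fun i => s i * (b i)^*) b n \is Num.real.
Proof.
move=> s_sym s_real; apply: sum_rev_conjC_real => k k_range.
rewrite (_ : n - (n - k) = k)%N; last by lia.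
by rewrite !rmorphM /= conjCK (CrealP (s_real _)) s_sym // mulrAC.
Qed.

Lemma conv_conjC_self_real (b : nat -> C) n : conv (fun i => (b i)^*) b n \is Num.real.
Proof.
have := @conv_conjC_real (fun=> 1) b n (fun _ _ => erefl) (fun=> rpred1 _).
by rewrite /conv; under eq_bigr do rewrite mul1r.
Qed.

Lemma sum_Im_eq0 (F : nat -> C) n :
  \sum_(1 <= k < n) F k \is Num.real -> \sum_(1 <= k < n) 'Im (F k) = 0.
Proof. by move=> F_real; rewrite -raddf_sum; apply/Creal_ImP. Qed.

End RealConvolution.

Section RconsChain.
Variables (T : Type) (x0 : T) (s : nat -> seq T).
Hypothesis s0 : s 0 = [::].
Hypothesis sS : forall n, exists x, s n.+1 = rcons (s n) x.

Lemma size_rcons_chain n : size (s n) = n.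
Proof. by elim: n => [|n IHn]; rewrite ?s0 //; have [x ->] := sS n; rewrite size_rcons IHn. Qed.

Lemma nth_rcons_chain n i : (i < n)%N -> nth x0 (s n) i = nth x0 (s i.+1) i.
Proof.
elim: n => // n IHn; rewrite ltnS leq_eqVlt => /predU1P[-> //|i_lt_n].
by have [x ->] := sS n; rewrite nth_rcons size_rcons_chain i_lt_n IHn.
Qed.

End RconsChain.

Section Coefficients.
Variable C : numClosedFieldType.
Variables a b : nat -> C.

Lemma gamma_rec n :
  (0 < n)%N -> gamma a b n = b (2 * n)%N - conv (fun d => (a (2 * d)%N)^*) (gamma a b) n.
Proof.
have gammasS k : exists x, gammas a b k.+1 = rcons (gammas a b k) x by eexists.
case: n => // n _; rewrite /gamma /= nth_rcons size_rcons_chain // ltnn eqxx.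
congr (_ - _); apply: eq_big_nat => k /andP[k_gt0 k_le_n].
by rewrite nth_rcons_chain ?prednK //; lia.
Qed.

Definition alpha_coef (d : nat) : C := 2%:R^-1 * ((1 + (-1) ^+ d) * (a d)^*).

Lemma alpha_coefE d : alpha_coef d = if odd d then 0 else (a d)^*.
Proof.
rewrite /alpha_coef -signr_odd; case: odd; first by rewrite addrN !mul0r mulr0.
by rewrite mulrA mulVf ?mul1r // pnatr_eq0.
Qed.

Lemma alpha_rec n : (0 < n)%N -> alpha a b n = b n - conv alpha_coef (alpha a b) n.
Proof.
have alphasS k : exists x, alphas a b k.+1 = rcons (alphas a b k) x by eexists.
case: n => // n _; rewrite /alpha /= nth_rcons size_rcons_chain // ltnn eqxx.
congr (_ - _); rewrite mulr_sumr; apply: eq_big_nat => k /andP[k_gt0 k_le_n].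
by rewrite nth_rcons_chain ?prednK // mulrA.
Qed.

Lemma Im_a_even_eq0 J :
  (forall j, (0 < j <= J)%N -> lambda2 a b j = 0) ->
  forall j, (0 < j <= J)%N -> 'Im (a (2 * j)%N) = 0.
Proof.
move=> lambda2_eq0; elim/ltn_ind=> j IHj j_range.
have conv_real_j : conv (fun i => (b (2 * i)%N)^*) (gamma a b) j \is Num.real.
  apply: (@conv_real _ (fun n => b (2 * n)%N) _ _ _ (fun n => n <= j)%N) => //.
  - exact: gamma_rec.
  - by move=> n _; apply: conv_conjC_self_real.
  move=> n d n_le_j d_gt0 d_lt_n; right; split; last by lia.
  by rewrite CrealJ; apply/Creal_ImP/IHj; lia.
move: (lambda2_eq0 j j_range); rewrite /lambda2 (sum_Im_eq0 _ _ conv_real_j) mulr0 subr0.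
by move/eqP; rewrite mulf_eq0 pnatr_eq0 => /eqP.
Qed.

Section RealKernel.
Variable J : nat.
Hypothesis Im_a_even : forall i, (0 < i <= J)%N -> 'Im (a (2 * i)%N) = 0.

Lemma alpha_coef_real d : (0 < d <= (2 * J).+1)%N -> alpha_coef d \is Num.real.
Proof.
move=> d_range; rewrite alpha_coefE; case: ifP => d_odd //.
rewrite -(odd_double_half d) d_odd add0n -mul2n CrealJ.
by apply/Creal_ImP/Im_a_even; lia.
Qed.

Lemma lambda_plus_even_eq0 : (0 < J)%N -> lambda_plus a b (2 * J) = 0.
Proof.
move=> J_gt0; pose u i := (-1) ^+ i * (b i)^*.
have conv_real_J : conv u (alpha a b) (2 * J) \is Num.real.
  apply: (@conv_real _ b _ alpha_coef _ (fun n => ~~ odd n && (n <= 2 * J)%N));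
    last by rewrite oddM /= leqnn.
  - exact: alpha_rec.
  - move=> n /andP[n_even _]; apply: conv_conjC_real => [k k_range|k].
      by rewrite -signr_odd -[RHS]signr_odd oddB ?(negbTE n_even) //; lia.
    by rewrite rpredX // rpredN rpred1.
  move=> n d /andP[n_even n_le] d_gt0 d_lt_n.
  case d_odd: (odd d); first by left; rewrite alpha_coefE d_odd.
  right; rewrite alpha_coef_real; last by lia.
  by rewrite oddB ?(negbTE n_even) ?d_odd //=; lia.
rewrite /lambda_plus Im_a_even; last by rewrite J_gt0 leqnn.
rewrite mulr0 add0r -[RHS]oppr0 -[in RHS](sum_Im_eq0 _ _ conv_real_J) -sumrN.
apply: eq_big_nat => k _; rewrite /u addn1 exprS mulN1r mulNr -mulrA [in RHS]ImMl //.
by rewrite rpredX // rpredN rpred1.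
Qed.

Lemma lambda_minus_eq0 n : (n <= 2 * J + 3)%N -> lambda_minus a b n = 0.
Proof.
move=> n_le.
have conv_real_n : conv (fun i => (b i)^*) (alpha a b) n \is Num.real.
  apply: (@conv_real _ b _ alpha_coef _ (fun k => k <= 2 * J + 3)%N) => //.
  - exact: alpha_rec.
  - by move=> k _; apply: conv_conjC_self_real.
  by move=> k d k_le d_gt0 d_lt_k; right; rewrite alpha_coef_real; lia.
by rewrite /lambda_minus (sum_Im_eq0 _ _ conv_real_n) oppr0.
Qed.

End RealKernel.

End Coefficients.

Theorem lemma2p3 (C : numClosedFieldType) (m : nat) (a b : nat -> C) (jstar : nat) :
  (1 <= m)%N ->
  (forall j : nat, (1 <= j <= jstar)%N -> (j <= m - 1)%N -> lambda2 a b j = 0) ->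
  (forall j : nat, (1 <= j <= jstar)%N -> (j <= m - 1)%N ->
     'Im (a (2 * j)%N) = 0 /\ lambda_plus a b (2 * j)%N = 0) /\
  (forall j : nat, (1 <= j <= 2 * jstar + 3)%N -> (j <= 2 * m - 1)%N ->
     lambda_minus a b j = 0).
Proof.
move=> _ lambda2_eq0.
have Im_a_even : forall i, (0 < i <= minn jstar (m - 1))%N -> 'Im (a (2 * i)%N) = 0.
  by apply: Im_a_even_eq0 => j j_range; apply: lambda2_eq0; lia.
split=> j j_range j_le.
- split; first by apply: Im_a_even; lia.
  apply: lambda_plus_even_eq0; last by lia.
  by move=> i i_range; apply: Im_a_even; lia.
- by apply: (@lambda_minus_eq0 C a b _ Im_a_even); lia.
Qed.
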